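(* Let $k$ be a positive integer. (i) There is no function $f:\mathbb{N}\to\mathbb{N}$ such that $\gamma_{P,k}(G-v)\le f(\gamma_{P,k}(G))$ for every graph $G$ and every vertex $v$ of $G$. (ii) For every graph $G$ and every vertex $v$ of $G$, $\gamma_{P,k}(G-v)\ge \gamma_{P,k}(G)-1$. (iii) Moreover, if $\gamma_{P,k}(G-v)= \gamma_{P,k}(G)-1$, then $\mathrm{rad}_{P,k}(G)\le \mathrm{rad}_{P,k}(G-v)$.
   Context: All graphs are finite and simple; $G-v$ is obtained by deleting $v$ and its incident edges. $N_G[v]$ is the closed neighbourhood of $v$, and $N_G[S]$ the union of closed neighbourhoods of vertices of $S$. For $S\subseteq V(G)$, define $\mathcal{P}^{0}_{G,k}(S)=N_G[S]$ and $\mathcal{P}^{i+1}_{G,k}(S)=\bigcup\{N_G[v] : v\in \mathcal{P}^{i}_{G,k}(S),\ |N_G[v]\setminus \mathcal{P}^{i}_{G,k}(S)|\le k\}$; these increase and stabilize to $\mathcal{P}^{\infty}_{G,k}(S)$. $S$ is a $k$-power dominating set ($k$-PDS) if $\mathcal{P}^{\infty}_{G,k}(S)=V(G)$; $\gamma_{P,k}(G)$ is the minimum size of a $k$-PDS. For a $k$-PDS $S$, $\mathrm{rad}_{P,k}(G,S)=1+\min\{i:\mathcal{P}^{i}_{G,k}(S)=V(G)\}$, and $\mathrm{rad}_{P,k}(G)$ is the minimum of $\mathrm{rad}_{P,k}(G,S)$ over all $k$-PDS $S$ of $G$ with $|S|=\gamma_{P,k}(G)$. *)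

From Stdlib Require Import ClassicalEpsilon.
From mathcomp Require Import all_boot.

Set Implicit Arguments.
Unset Strict Implicit.
Unset Printing Implicit Defensive.

(* A finite simple graph G is given by a vertex set V : {set T} inside a
   finite type T, and an adjacency relation e : rel T which is symmetric and
   irreflexive; only vertices of V (and edges between them) belong to G.
   The vertex-deleted graph G - v is (V :\ v, e). *)

Definition simple_rel (T : finType) (e : rel T) : Prop :=
  symmetric e /\ irreflexive e.

(* minimum of a set of natural numbers given as a predicate (0 if empty) *)
Definition minval (P : nat -> Prop) : nat :=
  match excluded_middle_informative (exists n, P n) with
  | left h =>
      @ex_minn (fun n => if excluded_middle_informative (P n) then true else false)
        (let: ex_intro n Hn := h in
         ex_intro _ n (match excluded_middle_informative (P n) as b
                        return (if b then true else false) with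
                       | left _ => erefl true
                       | right hn => False_ind _ (hn Hn) end))
  | right _ => 0
  end.

Section PowerDomination.
Variables (T : finType) (e : rel T) (V : {set T}) (k : nat).

Definition cnbhd (x : T) : {set T} := [set u in V | (u == x) || e x u].

Definition cnbhdS (S : {set T}) : {set T} := \bigcup_(x in S) cnbhd x.

Definition pd_step (P : {set T}) : {set T} :=
  \bigcup_(x in P | #|cnbhd x :\: P| <= k) cnbhd x.

Definition pd_iter (i : nat) (S : {set T}) : {set T} :=
  iter i pd_step (cnbhdS S).

Definition pd_inf (S : {set T}) : T -> Prop :=
  fun x => exists i, x \in pd_iter i S.

Definition is_kPDS (S : {set T}) : Prop :=
  S \subset V /\ (forall x, pd_inf S x <-> x \in V).

Definition gammaPk : nat :=
  minval (fun n => exists S, is_kPDS S /\ #|S| = n).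

Definition radPk_S (S : {set T}) : nat :=
  1 + minval (fun i => pd_iter i S = V).

Definition radPk : nat :=
  minval (fun r => exists S, is_kPDS S /\ #|S| = gammaPk /\ radPk_S S = r).

End PowerDomination.

From Stdlib Require Import ClassicalEpsilon.
From mathcomp Require Import all_boot.

Set Implicit Arguments.
Unset Strict Implicit.
Unset Printing Implicit Defensive.

(* If S is a minimum k-PDS of G - v, then v |: S is a k-PDS of G observing every
   vertex no later than S does in G - v; this gives (ii), and when
   gamma(G - v) = gamma(G) - 1 it is a minimum k-PDS of G, giving (iii).
   For (i), the star K_{1,n+1} has gamma = 1, while deleting its centre leaves
   n + 1 isolated vertices, whose only k-PDS is the whole vertex set. *)

Lemma minvalP (P : nat -> Prop) : (exists n, P n) -> P (minval P).
Proof.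
rewrite /minval; case: excluded_middle_informative => // ex _.
by case: ex_minnP => m; case: excluded_middle_informative.
Qed.

Lemma minval_min (P : nat -> Prop) m : P m -> minval P <= m.
Proof.
move=> Pm; rewrite /minval; case: excluded_middle_informative => [ex|[]]; last by exists m.
case: ex_minnP => n _; apply; by case: excluded_middle_informative.
Qed.

Lemma card_setU1_notin (T : finType) (v : T) (V S : {set T}) :
  S \subset V :\ v -> #|v |: S| = #|S|.+1.
Proof.
move=> SV; rewrite cardsU1; case: (boolP (v \in S)) => // vS.
by have := subsetP SV v vS; rewrite !inE eqxx.
Qed.

Section PowerDomination.
Variables (T : finType) (e : rel T) (V : {set T}) (k : nat).

Local Notation N := (cnbhd e V).
Local Notation P := (pd_iter e V k).

Lemma cnbhd_sub x : N x \subset V.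
Proof. by apply/subsetP => u; rewrite inE => /andP[]. Qed.

Lemma mem_cnbhd x : x \in V -> x \in N x.
Proof. by move=> xV; rewrite inE eqxx xV. Qed.

Lemma cnbhdS_sub_pd_iter (S : {set T}) i : S \subset V -> cnbhdS e V S \subset P i S.
Proof.
move=> SV; elim: i => // i IH.
apply/bigcupsP => x xS; rewrite /pd_iter /=; apply: (bigcup_max x) => //.
have NxP : N x \subset P i S := subset_trans (bigcup_sup x xS) IH.
rewrite (subsetP NxP) ?(mem_cnbhd (subsetP SV x xS)) //=.
by move: NxP; rewrite -setD_eq0 => /eqP ->; rewrite cards0.
Qed.

Lemma mem_pd_iter (S : {set T}) i x : S \subset V -> x \in S -> x \in P i S.
Proof.
move=> SV xS; apply: (subsetP (cnbhdS_sub_pd_iter i SV)).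
by apply/bigcupP; exists x => //; exact: mem_cnbhd (subsetP SV x xS).
Qed.

Lemma pd_iter_sub (S : {set T}) i : P i S \subset V.
Proof. by case: i => [|i]; apply/bigcupsP => x _; exact: cnbhd_sub. Qed.

Lemma pd_step_mono (A B : {set T}) : A \subset B -> pd_step e V k A \subset pd_step e V k B.
Proof.
move=> AB; apply/bigcupsP => x /andP[xA hx]; apply: (bigcup_max x) => //.
by rewrite (subsetP AB) //= (leq_trans _ hx) // subset_leq_card // setDS.
Qed.

Lemma pd_iter_subS (S : {set T}) i : S \subset V -> P i S \subset P i.+1 S.
Proof.
move=> SV; elim: i => [|i IH]; first exact: cnbhdS_sub_pd_iter.
exact: pd_step_mono IH.
Qed.

Lemma pd_iter_mono (S : {set T}) i j : S \subset V -> i <= j -> P i S \subset P j S.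
Proof.
move=> SV /subnK <-; elim: (j - i) => // d IH.
exact: subset_trans IH (pd_iter_subS _ SV).
Qed.

Lemma pd_iter_set0 i : P i set0 = set0.
Proof.
have step0 : pd_step e V k set0 = set0.
  by apply/eqP; rewrite -subset0; apply/bigcupsP => x; rewrite inE.
by rewrite /pd_iter /cnbhdS big_set0; elim: i => //= i ->.
Qed.

Lemma kPDS_pd_iter (S : {set T}) : is_kPDS e V k S -> exists i, P i S = V.
Proof.
case=> SV obs.
suff [i Hi] : exists i, {subset enum V <= P i S}.
  exists i; apply/eqP; rewrite eqEsubset pd_iter_sub.
  by apply/subsetP => x xV; apply: Hi; rewrite mem_enum.
have : {subset enum V <= V} by move=> x; rewrite mem_enum.
elim: (enum V) => [|a s IH] sV; first by exists 0.
have [i ai] : pd_inf e V k S a by apply/obs/sV; exact: mem_head.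
have [j sj] : exists j, {subset s <= P j S}.
  by apply: IH => x xs; apply: sV; rewrite inE xs orbT.
exists (maxn i j) => x; rewrite inE => /predU1P[->|xs].
  exact: (subsetP (pd_iter_mono SV (leq_maxl i j))).
exact: (subsetP (pd_iter_mono SV (leq_maxr i j))) _ (sj x xs).
Qed.

Lemma kPDS_setT : is_kPDS e V k V.
Proof.
split=> // x; split; first by case=> i; apply: (subsetP (pd_iter_sub V i)).
by move=> xV; exists 0; exact: mem_pd_iter.
Qed.

Lemma gammaPk_spec : exists S, is_kPDS e V k S /\ #|S| = gammaPk e V k.
Proof.
apply: (@minvalP (fun n => exists S, is_kPDS e V k S /\ #|S| = n)).
by exists #|V|, V; split; first exact: kPDS_setT.
Qed.

Lemma gammaPk_min (S : {set T}) : is_kPDS e V k S -> gammaPk e V k <= #|S|.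
Proof. by move=> hS; apply: minval_min; exists S. Qed.

Lemma gammaPk_gt0 v : v \in V -> 0 < gammaPk e V k.
Proof.
move=> vV; have [S [[_ obs] <-]] := gammaPk_spec.
rewrite card_gt0; apply: contraTneq vV => S0.
by apply/negP => /obs[i]; rewrite S0 pd_iter_set0 inE.
Qed.

Lemma radPk_spec : exists S,
  is_kPDS e V k S /\ #|S| = gammaPk e V k /\ radPk_S e V k S = radPk e V k.
Proof.
apply: (@minvalP (fun r => exists S,
  is_kPDS e V k S /\ #|S| = gammaPk e V k /\ radPk_S e V k S = r)).
by have [S [hS cS]] := gammaPk_spec; exists (radPk_S e V k S), S.
Qed.

Lemma radPk_min (S : {set T}) :
  is_kPDS e V k S -> #|S| = gammaPk e V k -> radPk e V k <= radPk_S e V k S.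
Proof. by move=> hS cS; apply: minval_min; exists S. Qed.

End PowerDomination.

Section VertexDeletion.
Variables (T : finType) (e : rel T) (V : {set T}) (k : nat) (v : T).
Hypothesis vV : v \in V.

Lemma cnbhd_setD1 x : cnbhd e (V :\ v) x = cnbhd e V x :\ v.
Proof. by apply/setP => u; rewrite !inE andbA. Qed.

Lemma setU1_sub (S : {set T}) : S \subset V :\ v -> v |: S \subset V.
Proof. by move=> SV; rewrite subUset sub1set vV (subset_trans SV) // subD1set. Qed.

(* Adding v only helps: in G the vertex v is observed from the start, so every
   vertex has at most as many unobserved neighbours as it has in G - v. *)
Lemma pd_iter_setD1_sub (S : {set T}) i : S \subset V :\ v ->
  pd_iter e (V :\ v) k i S \subset pd_iter e V k i (v |: S).
Proof.
move=> SV; have SvV := setU1_sub SV.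
have vP j : v \in pd_iter e V k j (v |: S) by apply: mem_pd_iter; rewrite ?setU11.
elim: i => [|i IH].
  apply/bigcupsP => x xS; apply: (bigcup_max x); first by rewrite setU1r.
  by rewrite cnbhd_setD1 subD1set.
apply/bigcupsP => x /andP[xA hx]; apply: (bigcup_max x); last by rewrite cnbhd_setD1 subD1set.
apply/andP; split; first exact: (subsetP IH).
apply: leq_trans hx; apply: subset_leq_card; apply/subsetP => u.
rewrite cnbhd_setD1 !in_setD in_set1 => /andP[uP ->].
rewrite andbT (contra (subsetP IH u)) //=.
by apply: contraNneq uP => ->; apply: vP.
Qed.

Lemma pd_iter_setU1_eq (S : {set T}) i : S \subset V :\ v ->
  pd_iter e (V :\ v) k i S = V :\ v -> pd_iter e V k i (v |: S) = V.
Proof.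
move=> SV Hi; apply/eqP; rewrite eqEsubset pd_iter_sub.
apply/subsetP => x xV; case: (eqVneq x v) => [->|xv].
  by apply: mem_pd_iter; rewrite ?setU11 ?setU1_sub.
by apply: (subsetP (pd_iter_setD1_sub i SV)); rewrite Hi !inE xv.
Qed.

Lemma kPDS_setU1 (S : {set T}) : is_kPDS e (V :\ v) k S -> is_kPDS e V k (v |: S).
Proof.
move=> hS; have [i Hi] := kPDS_pd_iter hS; have [SV _] := hS.
split; first exact: setU1_sub.
move=> x; split; first by case=> j; apply: (subsetP (pd_iter_sub e V k _ j)).
by move=> xV; exists i; rewrite (pd_iter_setU1_eq SV Hi).
Qed.

Lemma gammaPk_setD1_ge : gammaPk e V k - 1 <= gammaPk e (V :\ v) k.
Proof.
have [S [hS <-]] := gammaPk_spec e (V :\ v) k.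
rewrite leq_subLR add1n -(card_setU1_notin hS.1).
exact: gammaPk_min (kPDS_setU1 hS).
Qed.

Lemma radPk_setD1_ge : gammaPk e (V :\ v) k = gammaPk e V k - 1 ->
  radPk e V k <= radPk e (V :\ v) k.
Proof.
move=> gamma_eq; have [S [hS [cS <-]]] := radPk_spec e (V :\ v) k.
have cSv : #|v |: S| = gammaPk e V k.
  by rewrite (card_setU1_notin hS.1) cS gamma_eq subn1 prednK // (gammaPk_gt0 e k vV).
apply: leq_trans (radPk_min (kPDS_setU1 hS) cSv) _.
rewrite /radPk_S leq_add2l; apply/minval_min/(pd_iter_setU1_eq hS.1).
exact: (@minvalP (fun i => pd_iter e (V :\ v) k i S = V :\ v)) (kPDS_pd_iter hS).
Qed.

End VertexDeletion.

Lemma kPDS_edgeless (T : finType) (e : rel T) (V S : {set T}) k :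
  {in V &, forall x y, ~~ e x y} -> is_kPDS e V k S -> S = V.
Proof.
move=> noedge [SV obs]; have N1 x : x \in V -> cnbhd e V x \subset [set x].
  move=> xV; apply/subsetP => u; rewrite !inE => /andP[uV /orP[//|exu]].
  by rewrite (negbTE (noedge x u xV uV)) in exu.
have NS x : x \in S -> cnbhd e V x \subset S.
  by move=> xS; rewrite (subset_trans (N1 x _)) ?sub1set // (subsetP SV).
have PS i : pd_iter e V k i S \subset S.
  elim: i => [|i IH]; apply/bigcupsP => x; first exact: NS.
  by case/andP => /(subsetP IH) xS _; exact: NS.
apply/eqP; rewrite eqEsubset SV; apply/subsetP => x /obs[i].
exact: (subsetP (PS i)).
Qed.

Definition star_rel n : rel 'I_n.+2 := fun x y => (x == ord0) != (y == ord0).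
Arguments star_rel : clear implicits.

Lemma star_rel_simple n : simple_rel (star_rel n).
Proof. by split => [x y|x]; rewrite /star_rel ?eqxx // eq_sym. Qed.

Lemma gammaPk_star n k : gammaPk (star_rel n) setT k = 1.
Proof.
apply/eqP; rewrite eqn_leq (gammaPk_gt0 _ _ (in_setT ord0)) andbT -(cards1 (@ord0 n.+1)).
apply: gammaPk_min; split=> [|x]; first exact: subsetT.
split=> [_|_]; first by rewrite inE.
exists 0; apply/bigcupP; exists ord0; rewrite ?set11 // !inE /star_rel eqxx.
by case: (x == ord0).
Qed.

Lemma gammaPk_star_leaves n k : gammaPk (star_rel n) (setT :\ ord0) k = n.+1.
Proof.
have [S [hS <-]] := gammaPk_spec (star_rel n) (setT :\ ord0) k.
rewrite (kPDS_edgeless _ hS); last first.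
  by move=> x y; rewrite !inE !andbT => /negbTE x0 /negbTE y0; rewrite /star_rel x0 y0.
by have := cardsD1 ord0 [set: 'I_n.+2]; rewrite cardsT card_ord inE add1n => -[].
Qed.

Lemma no_gammaPk_setD1_bound k :
  ~ (exists f : nat -> nat, forall (T : finType) (e : rel T) (V : {set T}) (v : T),
       simple_rel e -> v \in V -> gammaPk e (V :\ v) k <= f (gammaPk e V k)).
Proof.
case=> f Hf; have := Hf _ _ _ _ (star_rel_simple (f 1)) (in_setT ord0).
by rewrite gammaPk_star gammaPk_star_leaves ltnn.
Qed.

Theorem mainTheorem2 (k : nat) (hk : 0 < k) :
  (* (i) *)
  ~ (exists f : nat -> nat,
        forall (T : finType) (e : rel T) (V : {set T}) (v : T),
          simple_rel e -> v \in V ->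
          gammaPk e (V :\ v) k <= f (gammaPk e V k))
  /\
  (forall (T : finType) (e : rel T) (V : {set T}) (v : T),
     simple_rel e -> v \in V ->
     (* (ii) *)
     gammaPk e V k - 1 <= gammaPk e (V :\ v) k
     /\
     (* (iii) *)
     (gammaPk e (V :\ v) k = gammaPk e V k - 1 ->
        radPk e V k <= radPk e (V :\ v) k)).
Proof.
split; first exact: no_gammaPk_setD1_bound.
move=> T e V v _ vV; split; first exact: gammaPk_setD1_ge.
exact: radPk_setD1_ge.
Qed.
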